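(* Let $\boldsymbol X \in \mathbb{R}^{n\times d}$, $\boldsymbol y \in \mathbb{R}^n$, $\boldsymbol M = \boldsymbol X^\top \boldsymbol X$, $\boldsymbol r = \boldsymbol X^\top \boldsymbol y$. Assume (A1) $\boldsymbol r > \mathbf 0$ and (A2) $M_{ij}\le 0$ for all $i\neq j$. Consider the ODE $$\frac{\mathrm d \theta_i}{\mathrm d t} = \theta_i\Big(r_i - \sum_{j=1}^d M_{ij}\theta_j\Big),\quad i=1,\dots,d.$$ For every $I\subset\{1,\dots,d\}$, the matrix $\boldsymbol M_{II}$ is invertible and there exists a unique fixed point $\boldsymbol\theta\ge\mathbf 0$ of this ODE whose support $\{i:\theta_i>0\}$ equals $I$; it is given by $\boldsymbol\theta_I = (\boldsymbol M_{II})^{-1}\boldsymbol r_I$ and $\boldsymbol\theta_{I^c}=\mathbf 0$. There are thus $2^d$ fixed points of the ODE.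
   Context: Vector inequalities are coordinatewise. For $I\subset\{1,\dots,d\}$, $I^c$ is its complement, $\boldsymbol\theta_I$ is the subvector of coordinates in $I$, and $\boldsymbol M_{II}$ is the principal submatrix with rows and columns indexed by $I$. *)

From HB Require Import structures.
From mathcomp Require Import all_boot all_order all_algebra.
Set Implicit Arguments. Unset Strict Implicit. Unset Printing Implicit Defensive.
Import Order.TTheory GRing.Theory Num.Theory.
Local Open Scope ring_scope.

(* Vectors in R^d are column vectors 'cV[R]_d; index sets I are {set 'I_d}.
   The coordinates of I are enumerated increasingly via enum_val. *)

Definition subII (R : Type) (d : nat) (M : 'M[R]_d) (I : {set 'I_d})
  : 'M[R]_#|I| := \matrix_(k < #|I|, l < #|I|) M (enum_val k) (enum_val l).

Definition subI (R : Type) (d : nat) (v : 'cV[R]_d) (I : {set 'I_d})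
  : 'cV[R]_#|I| := \col_(k < #|I|) v (enum_val k) 0.

Definition lv_fixed_point (R : pzRingType) (d : nat) (M : 'M[R]_d)
    (r theta : 'cV[R]_d) : Prop :=
  forall i : 'I_d, theta i 0 * (r i 0 - \sum_(j < d) M i j * theta j 0) = 0.

Definition nonneg (R : numDomainType) (d : nat) (theta : 'cV[R]_d) : Prop :=
  forall i : 'I_d, 0 <= theta i 0.

Definition supp (R : numDomainType) (d : nat) (theta : 'cV[R]_d) : {set 'I_d} :=
  [set i | 0 < theta i 0].

From HB Require Import structures.
From mathcomp Require Import all_boot all_order all_algebra.
Set Implicit Arguments. Unset Strict Implicit. Unset Printing Implicit Defensive.
Import Order.TTheory GRing.Theory Num.Theory.
Local Open Scope ring_scope.

(* Every principal submatrix M_II is again a Gram matrix X_I^T X_I with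
   nonpositive off-diagonal entries, and r_I = X_I^T y > 0, so it suffices to
   study Gram matrices N = Y^T Y of this kind with s = Y^T y > 0.  For them
   N v >= 0 forces v >= 0: the negative part u of v satisfies
   u_i (N u)_i <= 0 for every i, hence |Y u|^2 = u^T N u <= 0, so Y u = 0 and
   s^T u = y^T Y u = 0, which gives u = 0 because s > 0.  Applied to v and -v
   this shows that N is invertible, and N^-1 s is even positive, since a
   vanishing coordinate i would give s_i = sum_(j <> i) N_ij (N^-1 s)_j <= 0.
   Finally, a nonnegative fixed point with support I is exactly the extension
   by zero of a solution of M_II theta_I = r_I. *)

Definition neg_part (R : realDomainType) (k : nat) (v : 'cV[R]_k) : 'cV[R]_k :=
  \col_i Num.max (- v i 0) 0.

Lemma neg_part_ge0 (R : realDomainType) k (v : 'cV[R]_k) : nonneg (neg_part v).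
Proof. by move=> i; rewrite mxE le_max lexx orbT. Qed.

Lemma neg_part_ge_opp (R : realDomainType) k (v : 'cV[R]_k) i :
  - v i 0 <= neg_part v i 0.
Proof. by rewrite mxE le_max lexx. Qed.

Lemma neg_part_eq0 (R : realDomainType) k (v : 'cV[R]_k) :
  neg_part v = 0 -> nonneg v.
Proof.
by move=> v0 i; rewrite -oppr_le0 (le_trans (neg_part_ge_opp v i)) // v0 mxE.
Qed.

Lemma Zmatrix_neg_part_mul_le0 (R : realDomainType) k (N : 'M[R]_k)
    (v : 'cV[R]_k) :
  (forall i j, i != j -> N i j <= 0) -> (forall i, 0 <= (N *m v) i 0) ->
  forall i, neg_part v i 0 * (N *m neg_part v) i 0 <= 0.
Proof.
move=> offdiag_le0 Nv_ge0 i.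
have [vi_ge0|vi_lt0] := leP 0 (v i 0).
  by rewrite mxE max_r ?mul0r // oppr_le0.
have ui : neg_part v i 0 = - v i 0 by rewrite mxE max_l // oppr_ge0 ltW.
rewrite ui; apply: mulr_ge0_le0; first by rewrite oppr_ge0 ltW.
apply: le_trans (_ : _ <= - (N *m v) i 0) _; last by rewrite oppr_le0.
rewrite !mxE -sumrN; apply: ler_sum => j _.
have [<-|ij] := eqVneq i j; first by rewrite ui mulrN.
by rewrite -mulrN ler_wnM2l ?offdiag_le0 ?neg_part_ge_opp.
Qed.

Lemma tr_mul_self_eq0 (R : realDomainType) n (v : 'cV[R]_n) :
  (v^T *m v) 0 0 = 0 -> v = 0.
Proof.
have -> : (v^T *m v) 0 0 = \sum_a v a 0 ^+ 2.
  by rewrite mxE; apply: eq_bigr => a _; rewrite mxE expr2.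
move=> /(psumr_eq0P (fun a _ => sqr_ge0 (v a 0))) sq0.
apply/matrixP => a b; rewrite (ord1 b) [RHS]mxE.
by apply/eqP; rewrite -sqrf_eq0 sq0.
Qed.

Section GramZmatrix.

Variables (R : realDomainType) (n k : nat) (Y : 'M[R]_(n, k)).
Hypothesis gram_offdiag_le0 : forall i j, i != j -> (Y^T *m Y) i j <= 0.

Lemma gram_neg_part_ker (v : 'cV[R]_k) :
  (forall i, 0 <= ((Y^T *m Y) *m v) i 0) -> Y *m neg_part v = 0.
Proof.
move=> Nv_ge0; set u := neg_part v; apply: tr_mul_self_eq0.
have quad_le0 : ((Y *m u)^T *m (Y *m u)) 0 0 <= 0.
  rewrite trmx_mul -mulmxA (mulmxA Y^T) mxE; apply: sumr_le0 => i _.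
  by rewrite mxE Zmatrix_neg_part_mul_le0.
apply/eqP; rewrite eq_le quad_le0 mxE sumr_ge0 // => a _.
by rewrite mxE -expr2 sqr_ge0.
Qed.

Variable y : 'cV[R]_n.
Hypothesis gram_rhs_gt0 : forall i, 0 < (Y^T *m y) i 0.

Lemma gram_Zmatrix_nonneg (v : 'cV[R]_k) :
  (forall i, 0 <= ((Y^T *m Y) *m v) i 0) -> nonneg v.
Proof.
move=> /gram_neg_part_ker Yu0; apply: neg_part_eq0.
set u := neg_part v in Yu0 *.
have terms_ge0 i : true -> 0 <= (Y^T *m y) i 0 * u i 0.
  by move=> _; apply: mulr_ge0; [exact: ltW | exact: neg_part_ge0 v i].
have : ((Y^T *m y)^T *m u) 0 0 = 0.
  by rewrite trmx_mul trmxK -mulmxA Yu0 mulmx0 mxE.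
rewrite mxE; under eq_bigr do rewrite mxE; move=> sum0.
apply/matrixP => i j; rewrite (ord1 j) [RHS]mxE.
have /eqP := psumr_eq0P terms_ge0 sum0 (i := i) isT.
by rewrite mulf_eq0 gt_eqF // => /eqP.
Qed.

End GramZmatrix.

Section GramZmatrixField.

Variables (R : realFieldType) (n k : nat) (Y : 'M[R]_(n, k)) (y : 'cV[R]_n).
Hypothesis gram_offdiag_le0 : forall i j, i != j -> (Y^T *m Y) i j <= 0.
Hypothesis gram_rhs_gt0 : forall i, 0 < (Y^T *m y) i 0.

Lemma gram_Zmatrix_unit : Y^T *m Y \in unitmx.
Proof.
rewrite -row_free_unit; apply: inj_row_free => v vN0.
have Nv0 : (Y^T *m Y) *m v^T = 0.
  by rewrite -[Y^T *m Y in LHS]trmxK trmx_mul trmxK -trmx_mul vN0 trmx0.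
have kernel_ge0 (w : 'cV[R]_k) : (Y^T *m Y) *m w = 0 -> nonneg w.
  move=> Nw0; apply: (gram_Zmatrix_nonneg gram_offdiag_le0 gram_rhs_gt0) => i.
  by rewrite Nw0 mxE.
have vT_ge0 := kernel_ge0 _ Nv0.
have vT_le0 : nonneg (- v^T) by apply: kernel_ge0; rewrite mulmxN Nv0 oppr0.
apply/matrixP => a j; rewrite (ord1 a) [RHS]mxE; apply/eqP.
by have := vT_ge0 j; have := vT_le0 j; rewrite !mxE oppr_ge0 eq_le => -> ->.
Qed.

Lemma gram_Zmatrix_solve_gt0 i : 0 < (invmx (Y^T *m Y) *m (Y^T *m y)) i 0.
Proof.
set t := invmx _ *m _.
have Nt : (Y^T *m Y) *m t = Y^T *m y by rewrite mulKVmx ?gram_Zmatrix_unit.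
have t_ge0 : nonneg t.
  apply: (gram_Zmatrix_nonneg gram_offdiag_le0 gram_rhs_gt0) => j.
  by rewrite Nt ltW.
rewrite lt_def t_ge0 andbT; apply: contraTneq (gram_rhs_gt0 i) => ti0.
rewrite -Nt mxE (bigD1 i) //= ti0 mulr0 add0r -leNgt; apply: sumr_le0 => j ji.
by apply: mulr_le0_ge0; [rewrite gram_offdiag_le0 // eq_sym | exact: t_ge0].
Qed.

End GramZmatrixField.

Section Restriction.

Variables (R : pzRingType) (d : nat) (I : {set 'I_d}).

Definition extI (t : 'cV[R]_#|I|) : 'cV[R]_d := colsub enum_val 1%:M *m t.

Lemma subIE (v : 'cV[R]_d) : subI v I = rowsub enum_val v.
Proof. by apply/matrixP => k j; rewrite !mxE (ord1 j). Qed.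

Lemma extI_enum_val (t : 'cV[R]_#|I|) k : extI t (enum_val k) 0 = t k 0.
Proof.
rewrite mxE (bigD1 k) //= !mxE eqxx mul1r big1 ?addr0 // => l lk.
by rewrite !mxE (inj_eq enum_val_inj) eq_sym (negbTE lk) mul0r.
Qed.

Lemma extI_notin (t : 'cV[R]_#|I|) i : i \notin I -> extI t i 0 = 0.
Proof.
move=> iI; rewrite mxE big1 // => l _; rewrite !mxE.
by case: eqP => [il|_]; [rewrite il enum_valP in iI | rewrite mul0r].
Qed.

Lemma subI_extI (t : 'cV[R]_#|I|) : subI (extI t) I = t.
Proof. by apply/matrixP => k j; rewrite mxE extI_enum_val (ord1 j). Qed.

Lemma extI_subI (v : 'cV[R]_d) :
  (forall i, i \notin I -> v i 0 = 0) -> extI (subI v I) = v.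
Proof.
move=> v_off; apply/matrixP => i j; rewrite (ord1 j).
have [iI|iI] := boolP (i \in I); last by rewrite extI_notin ?v_off.
by rewrite -(enum_rankK_in iI iI) extI_enum_val mxE.
Qed.

Lemma subI_mul (M : 'M[R]_d) (v : 'cV[R]_d) :
  (forall i, i \notin I -> v i 0 = 0) ->
  subI (M *m v) I = subII M I *m subI v I.
Proof.
move=> /extI_subI {1}<-; rewrite /extI !subIE mulmxA -!mul_rowsub_mx.
by rewrite -mxsub_mul mulmx1.
Qed.

Lemma subI_eqP (v w : 'cV[R]_d) :
  subI v I = subI w I <-> {in I, forall i, v i 0 = w i 0}.
Proof.
split=> [vw i iI | vw]; last first.
  by apply/matrixP => k j; rewrite !mxE (vw _ (enum_valP k)).
have := congr1 (fun u : 'cV[R]_#|I| => u (enum_rank_in iI i) 0) vw.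
by rewrite !mxE enum_rankK_in.
Qed.

End Restriction.

Arguments extI {R d} I t.

Lemma in_supp_nonneg (R : numDomainType) d (theta : 'cV[R]_d) i :
  nonneg theta -> (i \in supp theta) = (theta i 0 != 0).
Proof. by move=> theta_ge0; rewrite inE lt_def theta_ge0 andbT. Qed.

Lemma nonneg_notin_supp (R : numDomainType) d (theta : 'cV[R]_d) i :
  nonneg theta -> i \notin supp theta -> theta i 0 = 0.
Proof. by move=> /(in_supp_nonneg i) ->; rewrite negbK => /eqP. Qed.

Lemma lv_fixed_pointE (R : idomainType) d (M : 'M[R]_d) (r theta : 'cV[R]_d) :
  lv_fixed_point M r theta <->
  forall i, theta i 0 != 0 -> (M *m theta) i 0 = r i 0.
Proof.
split=> fixed i.
  move=> /negPf theta_i_neq0; apply/eqP; move/eqP: (fixed i).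
  by rewrite mulf_eq0 theta_i_neq0 subr_eq0 mxE eq_sym.
have [->|/fixed] := eqVneq (theta i 0) 0; first by rewrite mul0r.
by rewrite mxE => ->; rewrite subrr mulr0.
Qed.

Lemma lv_fixed_point_subP (R : numDomainType) d (M : 'M[R]_d)
    (r theta : 'cV[R]_d) :
  nonneg theta ->
  let I := supp theta in
  lv_fixed_point M r theta <-> subII M I *m subI theta I = subI r I.
Proof.
move=> theta_ge0 I; rewrite -subI_mul => [|i]; last exact: nonneg_notin_supp.
apply: iff_trans (lv_fixed_pointE _ _ _) _.
apply: iff_trans _ (iff_sym (subI_eqP _ _ _)).
by split=> fixed i; [rewrite in_supp_nonneg | rewrite -in_supp_nonneg] => //;
  apply: fixed.
Qed.

Definition lv_point (R : comUnitRingType) d (M : 'M[R]_d) (r : 'cV[R]_d)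
    (I : {set 'I_d}) : 'cV[R]_d :=
  extI I (invmx (subII M I) *m subI r I).

Section LeastSquaresFixedPoints.

Variables (R : realFieldType) (n d : nat) (X : 'M[R]_(n, d)) (y : 'cV[R]_n).
Hypothesis r_gt0 : forall i, 0 < (X^T *m y) i 0.
Hypothesis M_offdiag_le0 : forall i j, i != j -> (X^T *m X) i j <= 0.
Local Notation M := (X^T *m X).
Local Notation r := (X^T *m y).
Variable I : {set 'I_d}.
Local Notation XI := (colsub enum_val X : 'M_(n, #|I|)).

Lemma subII_gram : subII M I = XI^T *m XI.
Proof. by rewrite [LHS]mxsub_mul trmx_mxsub. Qed.

Lemma subI_gram : subI r I = XI^T *m y.
Proof. by rewrite subIE -mul_rowsub_mx trmx_mxsub. Qed.

Lemma gram_sub_offdiag_le0 k l : k != l -> (XI^T *m XI) k l <= 0.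
Proof.
rewrite -subII_gram mxE => kl.
by rewrite M_offdiag_le0 // (inj_eq enum_val_inj).
Qed.

Lemma gram_sub_rhs_gt0 k : 0 < (XI^T *m y) k 0.
Proof. by rewrite -subI_gram mxE. Qed.

Lemma subII_unit : subII M I \in unitmx.
Proof.
by rewrite subII_gram (gram_Zmatrix_unit gram_sub_offdiag_le0 gram_sub_rhs_gt0).
Qed.

Lemma subII_solve_gt0 k : 0 < (invmx (subII M I) *m subI r I) k 0.
Proof.
rewrite subII_gram subI_gram.
exact: (gram_Zmatrix_solve_gt0 gram_sub_offdiag_le0 gram_sub_rhs_gt0).
Qed.

Lemma lv_point_notin i : i \notin I -> lv_point M r I i 0 = 0.
Proof. exact: extI_notin. Qed.

Lemma subI_lv_point : subI (lv_point M r I) I = invmx (subII M I) *m subI r I.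
Proof. exact: subI_extI. Qed.

Lemma lv_point_ge0 : nonneg (lv_point M r I).
Proof.
move=> i; have [iI|iI] := boolP (i \in I); last by rewrite lv_point_notin.
by rewrite -(enum_rankK_in iI iI) extI_enum_val ltW ?subII_solve_gt0.
Qed.

Lemma supp_lv_point : supp (lv_point M r I) = I.
Proof.
apply/setP => i; rewrite inE; have [iI|iI] := boolP (i \in I).
  by rewrite -(enum_rankK_in iI iI) extI_enum_val subII_solve_gt0.
by rewrite lv_point_notin ?ltxx.
Qed.

Lemma lv_point_fixed : lv_fixed_point M r (lv_point M r I).
Proof.
apply/(lv_fixed_point_subP _ _ lv_point_ge0); rewrite supp_lv_point.
by rewrite subI_lv_point mulKVmx ?subII_unit.
Qed.

Lemma lv_point_unique theta :
  nonneg theta -> lv_fixed_point M r theta -> supp theta = I ->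
  theta = lv_point M r I.
Proof.
move=> theta_ge0 /(lv_fixed_point_subP _ _ theta_ge0) + supp_theta.
rewrite supp_theta => sub_fixed.
rewrite -(@extI_subI _ _ I theta) => [|i]; last first.
  by rewrite -supp_theta; exact: nonneg_notin_supp.
by rewrite /lv_point -sub_fixed mulKmx ?subII_unit.
Qed.

Lemma lv_point_spec (theta := lv_point M r I) :
  [/\ nonneg theta, lv_fixed_point M r theta, supp theta = I,
      (subI theta I = invmx (subII M I) *m subI r I /\
       forall i, i \notin I -> theta i 0 = 0) &
      forall theta', nonneg theta' -> lv_fixed_point M r theta' ->
        supp theta' = I -> theta' = theta].
Proof.
split; [exact: lv_point_ge0 | exact: lv_point_fixed | exact: supp_lv_point | |].
  by split; [exact: subI_lv_point | exact: lv_point_notin].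
exact: lv_point_unique.
Qed.

End LeastSquaresFixedPoints.

Theorem proposition2 (R : realFieldType) (n d : nat)
    (X : 'M[R]_(n, d)) (y : 'cV[R]_n) :
  let M := X^T *m X in
  let r := X^T *m y in
  (forall i : 'I_d, 0 < r i 0) ->
  (forall i j : 'I_d, i != j -> M i j <= 0) ->
  (forall I : {set 'I_d},
      subII M I \in unitmx /\
      (exists theta : 'cV[R]_d,
         [/\ nonneg theta, lv_fixed_point M r theta, supp theta = I,
             (subI theta I = invmx (subII M I) *m subI r I /\
              forall i : 'I_d, i \notin I -> theta i 0 = 0) &
             (forall theta' : 'cV[R]_d,
                nonneg theta' -> lv_fixed_point M r theta' -> supp theta' = I ->
                theta' = theta)])) /\
  (* hence exactly 2^d nonnegative fixed points: they are in bijection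
     with the subsets of {1..d}, of which there are #|{set 'I_d}| = 2^d *)
  (exists f : {set 'I_d} -> 'cV[R]_d,
     injective f /\
     (forall theta : 'cV[R]_d,
        (nonneg theta /\ lv_fixed_point M r theta) <->
        (exists I : {set 'I_d}, theta = f I))).
Proof.
move=> M r r_gt0 M_offdiag_le0.
have spec := lv_point_spec r_gt0 M_offdiag_le0.
split=> [I|].
  by split; [exact: (subII_unit r_gt0 M_offdiag_le0) | exists (lv_point M r I)].
exists (lv_point M r); split.
  move=> I J eqIJ.
  have [_ _ suppI _ _] := spec I; have [_ _ suppJ _ _] := spec J.
  by rewrite -suppI eqIJ suppJ.
move=> theta; split=> [[theta_ge0 theta_fixed] | [I ->]]; last first.
  by have [] := spec I.
exists (supp theta); have [_ _ _ _ unique] := spec (supp theta).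
exact: unique.
Qed.
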